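(* A ranked poset is (isomorphic to) a nice section if and only if it is a two-element antichain or a 6-stack. Consequently, a ranked poset is (isomorphic to) a tower of nice sections if and only if it is a 6-tower.
   Context: All posets are finite. For a poset $P$ and $p\in P$, the rank $r(p)$ of $p$ is the largest $m$ such that there is a chain $p_0<\dots<p_m=p$ in $P$. $P$ is ranked of rank $r(P)$ if every maximal chain has exactly $r(P)+1$ elements. For $0\le i\le j$, $P(i,j)=\{p\in P:i\le r(p)\le j\}$, $P(i)=P(i,i)$ (induced order). The ordinal sum of posets $P_1,\dots,P_k$ ($k\ge1$) is their disjoint union ordered by the orders of the $P_i$ together with $p<q$ whenever $p\in P_i,q\in P_j,i<j$. The 6-crown $C_6$ is the poset on $\{x_0,x_1,x_2,y_0,y_1,y_2\}$ whose only strict comparabilities are $x_0<y_0>x_1<y_1>x_2<y_2>x_0$. A 6-stack is a ranked poset $P$ of rank $n\ge1$ such that $P(i,i+1)\cong C_6$ for each $0\le i<n$. A 6-tower is an ordinal sum of one or more posets each of which is a two-element antichain or a 6-stack. A section is either a two-element antichain or a poset on the set $\{[i,k]: 0\le i\le 2,\ 0\le k\le n\}$ (with $3(n+1)$ distinct elements), for some $n\ge 1$, such that: (1) $[i,k]<[i,l]$ whenever $0\le i\le 2$ and $0\le k<l\le n$; (2) for each $k$, $\{[0,k],[1,k],[2,k]\}$ is an antichain; (3) for all $i,j,k,l$, $[i,k]<[j,l]$ implies $[i+1,k]<[j+1,l]$ (first indices mod $3$); (4) for each $0\le k<n$ there are $i,j\in\{0,1,2\}$ with $[i,k]\not<[j,k+1]$.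 A section $P$ is nice if for all $p<q$ in $P$ there exist $r,s\in P$ with $p<r$, $q\not<r$, and $s<q$, $s\not<p$. A tower of (nice) sections is an ordinal sum of one or more (nice) sections. *)

(* Finite posets are represented as a finType T together
   with a strict order relation lt : rel T (irreflexive and transitive). *)
From mathcomp Require Import all_boot.
Set Implicit Arguments. Unset Strict Implicit. Unset Printing Implicit Defensive.

Definition strict_order (T : finType) (lt : rel T) : Prop :=
  irreflexive lt /\ transitive lt.

Definition poset_iso (T T' : finType) (lt : rel T) (lt' : rel T') : Prop :=
  exists f : T -> T', bijective f /\ forall x y, lt x y = lt' (f x) (f y).

Definition sub_rel (T : finType) (A : pred T) (lt : rel T) : rel {x : T | A x} :=
  fun u v => lt (val u) (val v).
Arguments sub_rel {T} A lt.

(* r(p): the largest m such that there is a chain p_0 < ... < p_m = p.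
   (A chain in a finite strict order has at most #|T| elements, so m < #|T|.) *)
Definition rank (T : finType) (lt : rel T) (p : T) : nat :=
  \max_(m < #|T|)
     (if [exists t : (m.+1).-tuple T, sorted lt t && (last p t == p)] then val m else 0).

Definition is_chain (T : finType) (lt : rel T) (C : {set T}) : Prop :=
  forall x y, x \in C -> y \in C -> x != y -> lt x y || lt y x.

Definition maximal_chain (T : finType) (lt : rel T) (C : {set T}) : Prop :=
  is_chain lt C /\ forall D : {set T}, is_chain lt D -> C \subset D -> D = C.

Definition ranked_of_rank (T : finType) (lt : rel T) (n : nat) : Prop :=
  forall C : {set T}, maximal_chain lt C -> #|C| = n.+1.

Definition ranked (T : finType) (lt : rel T) : Prop :=
  exists n, ranked_of_rank lt n.

Definition rank_slice (T : finType) (lt : rel T) (i j : nat) : pred T :=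
  fun p => (i <= rank lt p) && (rank lt p <= j).

Definition Pij (T : finType) (lt : rel T) (i j : nat) :
  rel {x : T | rank_slice lt i j x} := sub_rel (rank_slice lt i j) lt.
Arguments Pij {T} lt i j.

(* The 6-crown C6 on bool * 'I_3: (false,i) = x_i, (true,i) = y_i.
   Strict comparabilities: x0<y0, x1<y0, x1<y1, x2<y1, x2<y2, x0<y2. *)
Definition C6_lt : rel (bool * 'I_3) :=
  fun a b =>
    match a, b with
    | (false, i), (true, j) =>
        ((val i == 0) && (val j == 0)) || ((val i == 1) && (val j == 0)) ||
        ((val i == 1) && (val j == 1)) || ((val i == 2) && (val j == 1)) ||
        ((val i == 2) && (val j == 2)) || ((val i == 0) && (val j == 2))
    | _, _ => false
    end.

Definition two_antichain (T : finType) (lt : rel T) : Prop :=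
  #|T| = 2 /\ forall x y, ~~ lt x y.

Definition six_stack (T : finType) (lt : rel T) : Prop :=
  exists n, 1 <= n /\ ranked_of_rank lt n /\
    forall i, i < n -> poset_iso (Pij lt i i.+1) C6_lt.

(* Ordinal sum of one or more posets each satisfying Q: a map b onto blocks
   'I_k (k >= 1) such that elements of lower blocks lie below elements of
   higher blocks, and each block with the induced order satisfies Q.
   (Within a block the order is the induced one; no element of a higher block
   lies below one of a lower block, by antisymmetry.) *)
Definition ordinal_sum_of (Q : forall S : finType, rel S -> Prop)
  (T : finType) (lt : rel T) : Prop :=
  exists k (b : T -> 'I_k), 0 < k /\
    (forall x y, b x < b y -> lt x y) /\
    (forall i : 'I_k, Q _ (sub_rel (fun x => b x == i) lt)).

Definition six_tower (T : finType) (lt : rel T) : Prop :=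
  ordinal_sum_of (fun S ltS => two_antichain ltS \/ six_stack ltS) lt.

(* Section axioms (1)-(4) for a poset on {[i,k] : i < 3, k <= n},
   encoded as 'I_3 * 'I_n.+1 with [i,k] = (i,k). *)
Definition section_axioms (n : nat) (lt : rel ('I_3 * 'I_n.+1)) : Prop :=
  [/\ (forall (i : 'I_3) (k l : 'I_n.+1), k < l -> lt (i, k) (i, l)),
      (forall (i j : 'I_3) (k : 'I_n.+1), ~~ lt (i, k) (j, k)),
      (forall (i j : 'I_3) (k l : 'I_n.+1),
          lt (i, k) (j, l) -> lt (ordS i, k) (ordS j, l)) &
      (forall k : nat, k < n ->
          exists i j : 'I_3, ~~ lt (i, inord k) (j, inord k.+1))].

(* Niceness (READING: q \not\le r and s \not\le p). *)
Definition nice (T : finType) (lt : rel T) : Prop :=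
  forall p q, lt p q ->
    (exists r, lt p r /\ ~ (q = r \/ lt q r)) /\
    (exists s, lt s q /\ ~ (s = p \/ lt s p)).

Definition iso_nice_section (T : finType) (lt : rel T) : Prop :=
  (two_antichain lt /\ nice lt) \/
  exists n, 1 <= n /\ exists lt' : rel ('I_3 * 'I_n.+1),
    [/\ strict_order lt', section_axioms lt', nice lt' & poset_iso lt lt'].

Definition tower_of_nice_sections (T : finType) (lt : rel T) : Prop :=
  ordinal_sum_of iso_nice_section lt.

(* A 6-stack can be relabelled level by level so that level k is {[0,k],[1,k],[2,k]} and
   [i,k] < [j,k+1] exactly when j is i or i-1 (mod 3): each 6-crown between consecutive levels
   is matched against the labels already chosen on the lower one.  Elements two or more levels
   apart are comparable, and the result is a nice section.  Conversely, in a nice section the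
   order between consecutive levels is invariant under the rotation i |-> i+1, hence determined
   by which of [1,k+1], [2,k+1] lie above [0,k]; axiom (4) forbids both, niceness of
   [0,k] < [0,k+1] in a ranked poset forbids neither, and what is left is a 6-crown.  For towers
   it remains to see that each block of a ranked ordinal sum is ranked: a maximal chain of the
   block together with the outside part of a fixed maximal chain is a maximal chain. *)

From mathcomp Require Import all_boot zify.
Set Implicit Arguments. Unset Strict Implicit. Unset Printing Implicit Defensive.

Section Rank.
Variables (T : finType) (lt : rel T).

Lemma rank_witness x :
  exists s, [/\ sorted lt s, size s = (rank lt x).+1 & last x s = x].
Proof.
case r0 : (rank lt x) => [|r]; first by exists [:: x].
have cT : 0 < #|'I_#|T| | by rewrite card_ord; apply/card_gt0P; exists x.
move: r0; rewrite /rank.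
case: (eq_bigmax (fun m : 'I_#|T| => if [exists t : (m.+1).-tuple T,
  sorted lt t && (last x t == x)] then val m else 0) cT) => m ->.
case: ifP => // /existsP [t /andP [st /eqP tx]] <-.
by exists t; rewrite size_tuple.
Qed.

Lemma rank_le_strict_mono (h : T -> nat) :
  (forall x y, lt x y -> h x < h y) -> forall x, rank lt x <= h x.
Proof.
move=> hm x; case: (rank_witness x) => [[|y s]] [ss sz sx] //.
have path_le z t : path lt z t -> h z + size t <= h (last z t).
  elim: t z => [|a t IH] z /=; first by rewrite addn0.
  by case/andP=> /hm za /IH; lia.
by move: sz sx ss => [<-] /= <- /path_le; lia.
Qed.

Definition is_chainb (C : {set T}) :=
  [forall x in C, forall y in C, (x != y) ==> lt x y || lt y x].

Lemma is_chainP C : reflect (is_chain lt C) (is_chainb C).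
Proof.
apply: (iffP forall_inP) => [H x y xC yC xy | H x xC].
  by move/forall_inP: (H x xC) => /(_ y yC); rewrite xy.
by apply/forall_inP => y yC; apply/implyP; apply: H.
Qed.

Lemma maximal_chain_ext C :
  is_chain lt C -> exists2 M, maximal_chain lt M & C \subset M.
Proof.
move=> /is_chainP cC.
have PC : is_chainb C && (C \subset C) by rewrite cC subxx.
case: (@arg_maxnP _ C (fun D => is_chainb D && (C \subset D)) (fun D => #|D|) PC)
  => M /andP [cM sCM] Mmax.
exists M => //; split; first exact/is_chainP.
move=> D /is_chainP cD sMD; apply/eqP; rewrite eq_sym eqEcard sMD /=.
by apply: Mmax; rewrite cD (subset_trans sCM sMD).
Qed.

Lemma is_chain_setU1 M x : is_chain lt M ->
  (forall w, w \in M -> w != x -> lt x w || lt w x) -> is_chain lt (x |: M).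
Proof.
move=> cM hx y z; rewrite !inE => /predU1P [-> | yM] /predU1P [-> | zM] ne.
- by rewrite eqxx in ne.
- by apply: hx; rewrite // eq_sym.
- by rewrite orbC; apply: hx.
- exact: cM.
Qed.

Lemma maximal_chain_setU1 M x :
  maximal_chain lt M -> is_chain lt (x |: M) -> x \in M.
Proof. by case=> _ mM /mM <-; rewrite ?setU11 ?subsetUr. Qed.

Hypotheses (irr : irreflexive lt) (tr : transitive lt).

Lemma sorted_is_chain s : sorted lt s -> is_chain lt [set x in s].
Proof.
move=> ss x y; rewrite !inE => xs ys xy.
have ne : index x s != index y s.
  by apply: contra xy => /eqP e; rewrite -(nth_index x xs) e nth_index.
have lt_nth := sorted_ltn_nth tr x ss.
case: (ltngtP (index x s) (index y s)) ne => // h _.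
  by rewrite -{1}(nth_index x xs) -(nth_index x ys) lt_nth // inE index_mem.
by rewrite -{2}(nth_index x xs) -(nth_index x ys) lt_nth ?orbT // inE index_mem.
Qed.

Lemma size_sorted_le_rank s x :
  sorted lt s -> last x s = x -> size s <= (rank lt x).+1.
Proof.
case: s => [//|y s] ss sx.
have szT : size (y :: s) <= #|T|.
  by rewrite -(card_uniqP (sorted_uniq tr irr ss)) max_card.
rewrite ltnS /rank (bigmax_sup (Ordinal szT)) //=.
case: ifP => //= /negbT /negP []; apply/existsP.
by exists (in_tuple (y :: s)); rewrite ss sx eqxx.
Qed.

Lemma ltn_rank x y : lt x y -> rank lt x < rank lt y.
Proof.
move=> xy; case: (rank_witness x) => s [ss sz sx].
have : size (rcons s y) <= (rank lt y).+1.
  apply: size_sorted_le_rank; last by rewrite last_rcons.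
  by case: s ss sz sx => [|a s] //= ss _ sx; rewrite rcons_path ss sx.
by rewrite size_rcons sz.
Qed.

Lemma rank_S_cover x r : rank lt x = r.+1 -> exists2 z, lt z x & rank lt z = r.
Proof.
move=> rx; case: (rank_witness x) => s [ss sz sx]; rewrite rx in sz.
case/lastP: s ss sz sx => [|s' y] //; case/lastP: s' => [|s z] //.
rewrite !size_rcons last_rcons => ss [sz] yx; subst y.
have ssz : sorted lt (rcons s z) by move: ss; rewrite -cats1 => /cat_sorted2 [].
have zx : lt z x.
  case: s {sz ssz} ss => [|a s] /=; first by rewrite andbT.
  by rewrite !rcons_path last_rcons => /andP[].
exists z => //; apply/eqP; rewrite eqn_leq -ltnS -rx ltn_rank //=.
by rewrite -ltnS -sz -(size_rcons s z) size_sorted_le_rank // last_rcons.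
Qed.

Lemma ranked_rank_le n x : ranked_of_rank lt n -> rank lt x <= n.
Proof.
move=> rk; case: (rank_witness x) => s [ss sz _].
case: (maximal_chain_ext (sorted_is_chain ss)) => M /rk cardM /subset_leq_card.
by rewrite cardM cardsE (card_uniqP (sorted_uniq tr irr ss)) sz.
Qed.

Lemma maximal_chain_rank n M k : ranked_of_rank lt n -> maximal_chain lt M ->
  k <= n -> exists2 m, m \in M & rank lt m = k.
Proof.
move=> rk mM kn.
pose f x : 'I_n.+1 := inord (rank lt x).
have fE x : nat_of_ord (f x) = rank lt x by rewrite inordK // ltnS ranked_rank_le.
have finj : {in M &, injective f}.
  move=> x y xM yM /(congr1 (@nat_of_ord _)); rewrite !fE => e.
  apply/eqP; apply: contraT => xy.
  by case/orP: (mM.1 x y xM yM xy) => /ltn_rank; rewrite e ltnn.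
have /imsetP [m mMm] : (inord k : 'I_n.+1) \in f @: M.
  suff -> : f @: M = setT by [].
  by apply/eqP; rewrite eqEcard subsetT card_in_imset // (rk M mM) cardsT card_ord ltnSn.
by move/(congr1 (@nat_of_ord _)); rewrite fE inordK // => ->; exists m.
Qed.

Lemma ranked_intermediate n s q k : ranked_of_rank lt n -> lt s q ->
  rank lt s < k < rank lt q -> exists m, [/\ rank lt m = k, lt s m & lt m q].
Proof.
move=> rk sq /andP [sk kq].
have cC : is_chain lt [set s; q].
  move=> x y; rewrite !inE => /orP [] /eqP -> /orP [] /eqP -> //; rewrite ?eqxx //.
  - by rewrite sq.
  - by rewrite sq orbT.
case: (maximal_chain_ext cC) => M mM /subsetP sM.
have kn : k <= n by apply: ltnW (leq_trans kq (ranked_rank_le _ rk)).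
have [m mM' rm] := maximal_chain_rank rk mM kn.
have [sMs qMs] : s \in M /\ q \in M by split; apply: sM; rewrite !inE eqxx ?orbT.
have cmp x y : x \in M -> y \in M -> rank lt x < rank lt y -> lt x y.
  move=> xM yM rxy; have xy : x != y by apply: contraTneq rxy => ->; rewrite ltnn.
  by case/orP: (mM.1 x y xM yM xy) => // /ltn_rank; rewrite ltnNge ltnW.
by exists m; split=> //; apply: cmp; rewrite // rm.
Qed.

End Rank.

Lemma poset_iso_sym (T T' : finType) (lt : rel T) (lt' : rel T') :
  poset_iso lt lt' -> poset_iso lt' lt.
Proof.
by case=> f [[g fK gK] hf]; exists g; split; [exists f | move=> x y; rewrite hf !gK].
Qed.

Lemma poset_iso_trans (T T' T'' : finType)
    (lt : rel T) (lt' : rel T') (lt'' : rel T'') :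
  poset_iso lt lt' -> poset_iso lt' lt'' -> poset_iso lt lt''.
Proof.
case=> f [bf hf] [f' [bf' hf']]; exists (f' \o f); split; first exact: bij_comp.
by move=> x y; rewrite hf hf'.
Qed.

Lemma is_chain_image (T T' : finType) (lt : rel T) (lt' : rel T') (f : T -> T') C :
  (forall x y, lt x y -> lt' (f x) (f y)) ->
  is_chain lt C -> is_chain lt' (f @: C).
Proof.
move=> hf cC _ _ /imsetP [x xC ->] /imsetP [y yC ->] ne.
have xy : x != y by apply: contraNneq ne => ->.
by case/orP: (cC x y xC yC xy) => /hf ->; rewrite ?orbT.
Qed.

Section PosetIso.
Variables (T T' : finType) (lt : rel T) (lt' : rel T').
Variables (f : T -> T') (g : T' -> T).
Hypotheses (fK : cancel f g) (gK : cancel g f).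
Hypothesis hf : forall x y, lt x y = lt' (f x) (f y).

Let hg u v : lt' u v = lt (g u) (g v). Proof. by rewrite hf !gK. Qed.

Lemma maximal_chain_iso C : maximal_chain lt C -> maximal_chain lt' (f @: C).
Proof.
have hf' x y : lt x y -> lt' (f x) (f y) by rewrite hf.
have hg' u v : lt' u v -> lt (g u) (g v) by rewrite hg.
case=> cC mC; split; first exact: is_chain_image hf' cC.
move=> D cD /subsetP sCD.
have gD : g @: D = C.
  apply: mC; first exact: is_chain_image hg' cD.
  by apply/subsetP => x xC; rewrite -(fK x) imset_f // sCD // imset_f.
by rewrite -gD -imset_comp (eq_imset _ gK) imset_id.
Qed.

Lemma ranked_of_rank_iso n : ranked_of_rank lt' n -> ranked_of_rank lt n.
Proof.
move=> rk C /maximal_chain_iso /rk.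
by rewrite card_imset //; apply: can_inj fK.
Qed.

Hypotheses (so : strict_order lt) (so' : strict_order lt').

Lemma rank_iso x : rank lt' (f x) = rank lt x.
Proof.
case: so so' => irr tr [irr' tr'].
apply/eqP; rewrite eqn_leq; apply/andP; split.
  rewrite -{2}(fK x); apply: (rank_le_strict_mono (h := fun u => rank lt (g u))).
  by move=> u v; rewrite hg; apply: ltn_rank.
apply: (rank_le_strict_mono (h := fun y => rank lt' (f y))).
by move=> y z; rewrite hf; apply: ltn_rank.
Qed.

Lemma Pij_iso i j : poset_iso (Pij lt i j) (Pij lt' i j).
Proof.
have slf x : rank_slice lt' i j (f x) = rank_slice lt i j x.
  by rewrite /rank_slice rank_iso.
have slg y : rank_slice lt i j (g y) = rank_slice lt' i j y by rewrite -{2}(gK y) slf.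
pose F (u : {x | rank_slice lt i j x}) : {y | rank_slice lt' i j y} :=
  exist _ (f (val u)) (etrans (slf _) (valP u)).
pose G (v : {y | rank_slice lt' i j y}) : {x | rank_slice lt i j x} :=
  exist _ (g (val v)) (etrans (slg _) (valP v)).
exists F; split; last by move=> u v; rewrite /Pij /sub_rel /= hf.
by exists G => [u|v]; apply: val_inj; rewrite /= ?fK ?gK.
Qed.

End PosetIso.

Lemma ranked_poset_iso (T T' : finType) (lt : rel T) (lt' : rel T') :
  poset_iso lt lt' -> ranked lt' -> ranked lt.
Proof. by case=> f [[g fK gK] hf] [n /(ranked_of_rank_iso fK gK hf)]; exists n. Qed.

Lemma six_stack_poset_iso (T T' : finType) (lt : rel T) (lt' : rel T') :
  strict_order lt -> strict_order lt' -> poset_iso lt lt' ->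
  six_stack lt' -> six_stack lt.
Proof.
move=> so so' [f [[g fK gK] hf]] [n [n1 [rk hC6]]]; exists n.
split=> //; split=> [|i ni]; first exact: ranked_of_rank_iso fK gK hf n rk.
exact: poset_iso_trans (Pij_iso fK gK hf so so' i i.+1) (hC6 i ni).
Qed.

Definition o1 : 'I_3 := @Ordinal 3 1 isT.
Definition o2 : 'I_3 := @Ordinal 3 2 isT.

Definition adj (i j : 'I_3) := (j == i) || (ordS j == i).

Lemma adj_refl i : adj i i.
Proof. by rewrite /adj eqxx. Qed.

Lemma adj_ordS i j : adj i j -> adj (ordS i) (ordS j).
Proof. by move: i j; do 2!case=> [[|[|[|?]]] ?]. Qed.

Lemma adj_inj j j' : (forall i, adj i j = adj i j') -> j = j'.
Proof.
move=> h; move: (h ord0) (h o1) (h o2) => {h}.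
by move: j j'; do 2!case=> [[|[|[|?]]] ?] //; rewrite /adj /= => *; apply: val_inj.
Qed.

Lemma adj_path2 i j : exists m, adj i m && adj m j.
Proof.
move: i j; do 2!case=> [[|[|[|?]]] ?] //.
all: first [by exists ord0 | by exists o1 | by exists o2].
Qed.

Lemma adj_avoidl i j : exists2 i', adj i i' & i' != j.
Proof.
move: i j; do 2!case=> [[|[|[|?]]] ?] //.
all: first [by exists ord0 | by exists o1 | by exists o2].
Qed.

Lemma adj_avoidr i j : exists2 j', adj j' j & j' != i.
Proof.
move: i j; do 2!case=> [[|[|[|?]]] ?] //.
all: first [by exists ord0 | by exists o1 | by exists o2].
Qed.

Lemma C6_lt_diag i : C6_lt (false, i) (true, i).
Proof. by case: i => [[|[|[|?]]] ?]. Qed.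

(* An injective s on 'I_3 is a rotation or a reflection; the labels of the upper level must
   be rotated, resp. reflected and shifted by one, in the same way. *)
Definition upper_relabel (s : 'I_3 -> 'I_3) (j : 'I_3) :=
  if ordS (s j) == s (ordS j) then s j else s (ordS j).

Lemma C6_lt_upper_relabel s : injective s ->
  forall i j, C6_lt (false, s i) (true, upper_relabel s j) = adj i j.
Proof.
move=> si i j.
have sE k : s k = nth (s ord0) [:: s ord0; s o1; s o2] k.
  by case: k => [[|[|[|?]]] p] //=; congr s; apply: val_inj.
have ne k l : k != l -> s k != s l by move=> kl; apply: contra kl => /eqP /si ->.
move: (ne ord0 o1 isT) (ne o1 o2 isT) (ne ord0 o2 isT).
rewrite /upper_relabel (sE i) (sE j) (sE (ordS j)); move: (s ord0) (s o1) (s o2).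
by move: i j; do 5!case=> [[|[|[|?]]] ?] //.
Qed.

Lemma upper_relabel_inj s : injective s -> injective (upper_relabel s).
Proof. by move=> si j j' e; apply: adj_inj => i; rewrite -!(C6_lt_upper_relabel si) e. Qed.

Definition dif3 (j i : 'I_3) : 'I_3 := Ordinal (@ltn_pmod (j + 3 - i) 3 isT).

Definition sg3 (b : bool) (i : 'I_3) : 'I_3 := if b then i else dif3 ord0 i.

Lemma ordS3_id (i : 'I_3) : ordS (ordS (ordS i)) = i.
Proof. by apply: val_inj; case: i => [[|[|[|?]]] ?]. Qed.

Lemma iter_ordS_ord0 (i : 'I_3) : iter i (@ordS 3) ord0 = i.
Proof. by apply: val_inj; case: i => [[|[|[|?]]] ?]. Qed.

Lemma iter_ordS_dif3 (i j : 'I_3) : iter i (@ordS 3) (dif3 j i) = j.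
Proof. by apply: val_inj; move: i j; do 2!case=> [[|[|[|?]]] ?]. Qed.

Lemma sg3K b : involutive (sg3 b).
Proof. by case: b => // i; apply: val_inj; case: i => [[|[|[|?]]] ?]. Qed.

Lemma C6_lt_sg3 (b1 b2 : bool) : b1 != b2 -> forall i j,
  C6_lt (false, sg3 b2 i) (true, sg3 b2 j) = nth true [:: true; b1; b2] (dif3 j i).
Proof. by case: b1; case: b2 => // _; do 2!case=> [[|[|[|?]]] ?]. Qed.

Section CrownSection.
Variable n : nat.

Definition crown_section : rel ('I_3 * 'I_n.+1) :=
  fun u v => ((u.2.+1 == v.2) && adj u.1 v.1) || (u.2.+2 <= v.2).

Lemma crown_section_level u v : crown_section u v -> u.2 < v.2.
Proof. by case/orP => [/andP [/eqP <- _] | ]; lia. Qed.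

Lemma crown_section_strict_order : strict_order crown_section.
Proof.
split=> [u | u v w]; first by apply/negP => /crown_section_level; rewrite ltnn.
move=> /crown_section_level vu /crown_section_level uw.
by rewrite /crown_section orbC; apply/orP; left; lia.
Qed.

Lemma crown_section_axioms : section_axioms crown_section.
Proof.
split=> [i k l kl | i j k | i j k l | k kn].
- rewrite /crown_section /=; case: eqP => [_|]; first by rewrite adj_refl.
  by move=> ne; apply/orP; right; lia.
- by apply/negP => /crown_section_level; rewrite ltnn.
- by rewrite /crown_section /= => /orP [/andP [-> /adj_ordS ->] | ->]; rewrite ?orbT.
- exists ord0, o1; rewrite /crown_section /= !inordK //; try lia.
  by rewrite eqxx ltnn orbF.
Qed.

Lemma crown_section_nice : nice crown_section.
Proof.
move=> [i k] [j l] ij; have /= kl := crown_section_level ij.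
have ln : l <= n by rewrite -ltnS ltn_ord.
split.
- have [i' ii' i'j] := adj_avoidl i j.
  exists (i', inord k.+1); rewrite /crown_section /= inordK; last by lia.
  split; first by rewrite eqxx ii'.
  case=> [[e _] | /orP [/andP [/eqP e _] | ]]; [by rewrite e eqxx in i'j | lia | lia].
- have [j' j'j j'i] := adj_avoidr i j.
  exists (j', inord l.-1); rewrite /crown_section /= inordK; last by lia.
  split; first by rewrite prednK ?eqxx ?j'j //; lia.
  case=> [[e _] | /orP [/andP [/eqP e _] | ]]; [by rewrite e eqxx in j'i | lia | lia].
Qed.

End CrownSection.

Lemma inj_surj_bij (U T : finType) (g : U -> T) :
  injective g -> (forall x, exists u, g u = x) -> bijective g.
Proof.
move=> ginj gsurj; apply: (inj_card_bij ginj); rewrite -(card_codom ginj).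
by apply/subset_leq_card/subsetP => x _; have [u <-] := gsurj x; apply: codom_f.
Qed.

Section StackLabelling.
Variables (T : finType) (lt : rel T).
Hypotheses (irr : irreflexive lt) (tr : transitive lt).
Variable n : nat.
Hypotheses (n1 : 0 < n) (rk : ranked_of_rank lt n)
  (hC6 : forall k, k < n -> poset_iso (Pij lt k k.+1) C6_lt).

Definition labels_level k (l : 'I_3 -> T) :=
  [/\ forall i, rank lt (l i) = k, injective l &
      forall x, rank lt x = k -> exists i, l i = x].

Lemma C6_slice_labelling k : k < n -> exists lo hi,
  [/\ labels_level k lo, labels_level k.+1 hi &
      forall i j, lt (lo i) (hi j) = C6_lt (false, i) (true, j)].
Proof.
move=> kn; case: (hC6 kn) => phi [[psi phiK psiK] hphi].
pose lo i := val (psi (false, i)); pose hi i := val (psi (true, i)).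
have hpsi c c' : lt (val (psi c)) (val (psi c')) = C6_lt c c'.
  by rewrite -[C6_lt _ _]/(C6_lt c c') -{2}(psiK c) -{2}(psiK c') -hphi.
have slice x : rank lt x = k \/ rank lt x = k.+1 -> exists c, val (psi c) = x.
  move=> hx; have xs : rank_slice lt k k.+1 x.
    by case: hx => rx; rewrite /rank_slice rx ?leqnn ?leqnSn.
  by exists (phi (exist _ x xs)); rewrite phiK.
have sliceE x : rank_slice lt k k.+1 x -> rank lt x = k \/ rank lt x = k.+1.
  by case/andP; rewrite leq_eqVlt => /orP [/eqP <-|]; [left | right; lia].
have rlo i : rank lt (lo i) = k.
  case: (sliceE _ (valP (psi (false, i)))) => // /(rank_S_cover irr tr) [z zlo rz].
  have [[b j] zE] := slice z (or_introl rz).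
  by move: zlo; rewrite -zE hpsi; case: b {zE}.
have rhi i : rank lt (hi i) = k.+1.
  have lohi : lt (lo i) (hi i) by rewrite hpsi C6_lt_diag.
  case: (sliceE _ (valP (psi (true, i)))) => // rk_hi.
  by move: (ltn_rank irr tr lohi); rewrite rlo [rank lt (hi i)]rk_hi ltnn.
have psi_inj b : injective (fun i => val (psi (b, i))).
  by move=> i j /val_inj /(can_inj psiK) [].
exists lo, hi; split; last by move=> i j; rewrite hpsi.
- split=> [//||x rx]; first exact: psi_inj.
  have [[[] i] xE] := slice x (or_introl rx); subst x; last by exists i.
  by move: rx; rewrite -/(hi i) rhi; lia.
- split=> [//||x rx]; first exact: psi_inj.
  have [[[] i] xE] := slice x (or_intror rx); subst x; first by exists i.
  by move: rx; rewrite -/(lo i) rlo; lia.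
Qed.

Lemma labels_level_perm k l l' : labels_level k l -> labels_level k l' ->
  exists2 s, injective s & forall i, l' (s i) = l i.
Proof.
move=> [rl linj _] [_ _ l'surj].
pose s i := odflt ord0 [pick m | l' m == l i].
have sE i : l' (s i) = l i.
  rewrite /s; case: pickP => [m /eqP // | none].
  by have [m e] := l'surj _ (rl i); move: (none m); rewrite e eqxx.
by exists s => // i j e; apply: linj; rewrite -!sE e.
Qed.

Lemma labels_level_comp k l s :
  labels_level k l -> injective s -> labels_level k (l \o s).
Proof.
move=> [rl linj lsurj] sinj; split=> [i | | x /lsurj [m <-]]; first exact: rl.
  exact: inj_comp.
by exists (invF sinj m); rewrite /= f_invF.
Qed.

Lemma stack_labelling K : K <= n -> exists lab : nat -> 'I_3 -> T,
  (forall k, k <= K -> labels_level k (lab k)) /\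
  (forall k, k < K -> forall i j, lt (lab k i) (lab k.+1 j) = adj i j).
Proof.
elim: K => [_ | K IH Kn].
  have [lo [hi [lo_lab _ _]]] := C6_slice_labelling n1.
  by exists (fun _ => lo); split => // k; rewrite leqn0 => /eqP ->.
have [lab [lab_level lab_adj]] := IH (ltnW Kn).
have [lo [hi [lo_lab hi_lab lo_hi]]] := C6_slice_labelling Kn.
have [s sinj sE] := labels_level_perm (lab_level K (leqnn K)) lo_lab.
pose lab' k := if k == K.+1 then hi \o upper_relabel s else lab k.
have lab'E k : k <= K -> lab' k = lab k by move=> kK; rewrite /lab' ifN //; lia.
exists lab'; split=> k.
  rewrite leq_eqVlt ltnS => /orP [/eqP -> | kK]; last by rewrite lab'E //; apply: lab_level.
  by rewrite /lab' eqxx; apply: labels_level_comp (upper_relabel_inj sinj).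
rewrite ltnS leq_eqVlt => /orP [/eqP -> | kK] i j.
  by rewrite lab'E // /lab' eqxx /= -sE lo_hi C6_lt_upper_relabel.
by rewrite !lab'E //; [apply: lab_adj | lia].
Qed.

Section Labelled.
Variable lab : nat -> 'I_3 -> T.
Hypotheses (lab_level : forall k, k <= n -> labels_level k (lab k))
  (lab_adj : forall k, k < n -> forall i j, lt (lab k i) (lab k.+1 j) = adj i j).

Let rank_lab k i : k <= n -> rank lt (lab k i) = k.
Proof. by case/lab_level. Qed.

Lemma lt_lab_far d k i j : k + d.+2 <= n -> lt (lab k i) (lab (k + d.+2) j).
Proof.
elim: d k i j => [|d IH] k i j hk.
  have [m /andP [im mj]] := adj_path2 i j.
  by apply: (tr (y := lab k.+1 m)); rewrite ?addn2 lab_adj //; lia.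
apply: (tr (y := lab (k + d.+2) j)); first by apply: IH; lia.
by rewrite (addnS k d.+2) lab_adj ?adj_refl //; lia.
Qed.

Lemma lt_lab k l i j : k <= n -> l <= n ->
  lt (lab k i) (lab l j) = crown_section (i, @inord n k) (j, inord l).
Proof.
move=> kn ln; rewrite /crown_section /= !inordK ?ltnS //.
case: (leqP l k) => [lk | kl].
  have [-> ->] : (k.+1 == l) = false /\ (k.+2 <= l) = false by split; apply/negbTE; lia.
  by apply/negbTE/negP => /(ltn_rank irr tr); rewrite !rank_lab //; lia.
case: (eqVneq l k.+1) => [-> | ne]; first by rewrite ltnn orbF lab_adj //; lia.
rewrite (_ : k.+2 <= l) ?orbT; last by lia.
by rewrite (_ : l = k + (l - k.+2).+2); [apply: lt_lab_far | ]; lia.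
Qed.

End Labelled.

Lemma six_stack_crown_iso : poset_iso lt (@crown_section n).
Proof.
have [lab [lab_level lab_adj]] := stack_labelling (leqnn n).
pose g (u : 'I_3 * 'I_n.+1) := lab u.2 u.1.
have lev (k : 'I_n.+1) : k <= n by rewrite -ltnS.
have ginj : injective g.
  move=> [i k] [j l]; rewrite /g /= => e.
  have kl : k = l.
    apply: val_inj; have := congr1 (rank lt) e.
    by case: (lab_level k (lev k)) => -> _ _; case: (lab_level l (lev l)) => -> _ _.
  by subst l; case: (lab_level k (lev k)) => _ /(_ _ _ e) ->.
have gsurj x : exists u, g u = x.
  have rx := ranked_rank_le irr tr x rk.
  have [_ _ /(_ x erefl) [i e]] := lab_level _ rx.
  by exists (i, inord (rank lt x)); rewrite /g /= inordK.
apply: poset_iso_sym; exists g; split; first exact: inj_surj_bij.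
by move=> [i k] [j l]; rewrite /g /= lt_lab // !inord_val.
Qed.

End StackLabelling.

Section NiceSection.
Variables (n : nat) (lt : rel ('I_3 * 'I_n.+1)).
Hypotheses (so : strict_order lt) (ax : section_axioms lt).

Let irr : irreflexive lt. Proof. by case: so. Qed.
Let tr : transitive lt. Proof. by case: so. Qed.

Lemma section_lt_level u v : lt u v -> u.2 < v.2.
Proof.
case: u v => i k [j l]; case: ax => ax1 ax2 _ _ ijkl /=; rewrite ltnNge; apply/negP.
rewrite leq_eqVlt => /orP [/eqP /ord_inj lk | lk].
  by subst l; rewrite (negbTE (ax2 _ _ _)) in ijkl.
by move: (ax2 i j k); rewrite (tr ijkl (ax1 j l k lk)).
Qed.

Lemma section_rank u : rank lt u = u.2.
Proof.
case: ax => ax1 _ _ _.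
apply/eqP; rewrite eqn_leq; apply/andP; split.
  exact: (rank_le_strict_mono (h := fun v => nat_of_ord v.2) section_lt_level).
have rank_ge m i : m <= n -> m <= rank lt (i, inord m).
  elim: m => [//|m IH] mn; apply: leq_ltn_trans (IH (ltnW mn)) (ltn_rank irr tr _).
  by apply: ax1; rewrite !inordK //; lia.
by case: u => i k; rewrite -{2}(inord_val k) /= rank_ge // -ltnS.
Qed.

Lemma section_ranked_of_rank : ranked lt -> ranked_of_rank lt n.
Proof.
case: ax => ax1 _ _ _ [m rk]; suff e : m = n by rewrite e in rk.
pose C := [set (ord0 : 'I_3, k) | k : 'I_n.+1].
have cC : is_chain lt C.
  move=> _ _ /imsetP [k _ ->] /imsetP [l _ ->] ne.
  have kl : k != l by apply: contraNneq ne => ->.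
  by case: (ltngtP k l) kl => [/ax1 -> | /ax1 -> | /val_inj ->]; rewrite ?orbT ?eqxx.
have mC : maximal_chain lt C.
  split=> // D cD /subsetP sCD; apply/eqP; rewrite eqEsubset andbC; apply/andP; split.
    exact/subsetP.
  apply/subsetP => x xD; have xC : (ord0, x.2) \in C by apply: imset_f.
  case: (eqVneq x (ord0, x.2)) => [-> // | ne].
  by case/orP: (cD _ _ xD (sCD _ xC) ne) => /section_lt_level; rewrite ltnn.
have := rk C mC; rewrite card_imset ?card_ord; first by case.
by move=> k l [].
Qed.

Lemma section_lt_ordS i j k l : lt (ordS i, k) (ordS j, l) = lt (i, k) (j, l).
Proof.
case: ax => _ _ ax3 _; apply/idP/idP; last exact: ax3.
by move=> h; rewrite -[i]ordS3_id -[j]ordS3_id; do 2!apply: (ax3).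
Qed.

Lemma section_lt_shift i j k l : lt (i, k) (j, l) = lt (ord0, k) (dif3 j i, l).
Proof.
have iterE m u v :
    lt (iter m (@ordS 3) u, k) (iter m (@ordS 3) v, l) = lt (u, k) (v, l).
  by elim: m => //= m IH; rewrite section_lt_ordS.
by rewrite -(iterE i ord0 (dif3 j i)) iter_ordS_ord0 iter_ordS_dif3.
Qed.

Section Step.
Variable k : nat.
Hypothesis kn : k < n.
Let K : 'I_n.+1 := inord k.
Let K1 : 'I_n.+1 := inord k.+1.
Let step d := lt (ord0, K) (d, K1).

Let K_val : nat_of_ord K = k. Proof. by rewrite inordK //; lia. Qed.
Let K1_val : nat_of_ord K1 = k.+1. Proof. by rewrite inordK. Qed.

Let step_ord0 : step ord0.
Proof. by case: ax => ax1 _ _ _; apply: ax1; rewrite K_val K1_val. Qed.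

Let stepE d : step d = nth true [:: true; step o1; step o2] d.
Proof.
by case: d => [[|[|[|?]]] p] //=; rewrite -?step_ord0; congr step; apply: val_inj.
Qed.

Let lt_step i j : lt (i, K) (j, K1) = step (dif3 j i).
Proof. exact: section_lt_shift. Qed.

Lemma section_step_not_full : ~~ (step o1 && step o2).
Proof.
case: ax => _ _ _ /(_ k kn) [i [j]]; rewrite -/K -/K1 lt_step stepE.
by apply: contra => /andP [h1 h2]; case: (dif3 j i) => [[|[|[|?]]] ?].
Qed.

(* Niceness of [0,k] < [0,k+1] gives s < [0,k+1] not below [0,k]; by rankedness some element
   of level k lies between them, and it would have to be [0,k] if that were the only element of
   level k below [0,k+1]. *)
Lemma nice_section_step_thin : nice lt -> ranked lt -> step o1 || step o2.
Proof.
move=> nc rkd; apply: contraT; rewrite negb_or => /andP [/negbTE n1 /negbTE n2].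
have below j : lt (j, K) (ord0, K1) -> j = ord0.
  by rewrite lt_step stepE n1 n2; case: j => [[|[|[|?]]] ?] //= _; apply: val_inj.
have [_ [[j l] [sq nsp]]] := nc _ _ step_ord0.
have [m [sm mK mq]] :
    exists m, [/\ m = (j, l) \/ lt (j, l) m, m.2 = K & lt m (ord0, K1)].
  have := section_lt_level sq; rewrite /= K1_val ltnS leq_eqVlt => /orP [/eqP lK | lK].
    by exists (j, l); split; [left | apply: ord_inj; rewrite K_val |].
  have rk := section_ranked_of_rank rkd.
  have [|m [rm sm mq]] := ranked_intermediate irr tr rk sq (k := k).
    by rewrite !section_rank /= K1_val lK ltnSn.
  by exists m; split => //; [right | apply: ord_inj; rewrite -section_rank rm K_val].
case: m sm mK mq => i' l' sm /= mK; subst l'; move/below => ei; subst i'.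
by case: nsp; case: sm => [<- | h]; [left | right].
Qed.

Lemma nice_section_slice_C6 :
  nice lt -> ranked lt -> poset_iso (Pij lt k k.+1) C6_lt.
Proof.
move=> nc rkd; pose sig := sg3 (step o2).
have C6_sig i j : C6_lt (false, sig i) (true, sig j) = lt (i, K) (j, K1).
  rewrite (@C6_lt_sg3 (step o1)) ?lt_step -?stepE //.
  move: section_step_not_full (nice_section_step_thin nc rkd).
  by case: (step o1); case: (step o2).
have sliceE x : rank_slice lt k k.+1 x = (x.2 == K) || (x.2 == K1).
  by rewrite /rank_slice section_rank -!(inj_eq val_inj) /= K_val K1_val; lia.
have [KK1 K1K] : (K == K1) = false /\ (K1 == K) = false.
  by rewrite -!(inj_eq val_inj) /= K_val K1_val; split; lia.
pose level (c : bool) := if c then K1 else K.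
have levelE x : rank_slice lt k k.+1 x -> level (x.2 == K1) = x.2.
  by rewrite sliceE /level => /orP [] /eqP ->; rewrite ?eqxx ?KK1.
have psiP (c : bool * 'I_3) : rank_slice lt k k.+1 (sig c.2, level c.1).
  by rewrite sliceE /level; case: c.1; rewrite eqxx ?orbT.
pose psi c : {x | rank_slice lt k k.+1 x} := exist (rank_slice lt k k.+1) _ (psiP c).
pose phi (u : {x | rank_slice lt k k.+1 x}) := ((val u).2 == K1, sig (val u).1).
exists phi; split.
  exists psi => [[[i a] xs] | [c i]].
    by apply: val_inj; rewrite /= /sig sg3K (levelE _ xs).
  by rewrite /phi /sig /= sg3K /level; case: c; rewrite ?eqxx ?KK1.
case: ax => _ ax2 _ _ [[i a] xs] [[j b] ys]; rewrite /Pij /sub_rel /phi /=.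
move: xs ys; rewrite !sliceE /= => /orP [] /eqP -> /orP [] /eqP ->; rewrite ?eqxx ?KK1 ?K1K.
- by apply/negbTE/ax2.
- by rewrite -C6_sig.
- by apply/negbTE/negP => /section_lt_level /=; rewrite K_val K1_val; lia.
- by apply/negbTE/ax2.
Qed.
End Step.

Lemma nice_section_six_stack : 0 < n -> nice lt -> ranked lt -> six_stack lt.
Proof.
move=> n1 nc rkd; exists n; split=> //; split; first exact: section_ranked_of_rank.
by move=> k kn; apply: nice_section_slice_C6.
Qed.

End NiceSection.

Section Block.
Variables (T : finType) (lt : rel T) (K : nat) (b : T -> 'I_K).
Hypothesis hb : forall x y, b x < b y -> lt x y.
Variable i : 'I_K.

Let U := {x : T | b x == i}.
Let ltU := sub_rel (fun x => b x == i) lt.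

Lemma ordinal_sum_cmp x y : b x != b y -> lt x y || lt y x.
Proof.
by case: (ltngtP (b x) (b y)) => [/hb -> | /hb -> | /val_inj ->]; rewrite ?orbT ?eqxx.
Qed.

Definition block_lift (C : {set U}) (M : {set T}) :=
  val @: C :|: [set x in M | b x != i].

Lemma block_lift_chain C M :
  is_chain ltU C -> is_chain lt M -> is_chain lt (block_lift C M).
Proof.
move=> cC cM x y; rewrite !inE.
have inC z : z \in val @: C -> b z == i by case/imsetP => u _ ->; exact: (valP u).
case/orP=> [xC | /andP [xM bx]] /orP [yC | /andP [yM byi]] ne.
- case/imsetP: xC ne => u uC ->; case/imsetP: yC => v vC -> ne.
  by apply: cC => //; apply: contraNneq ne => ->.
- by apply: ordinal_sum_cmp; rewrite (eqP (inC _ xC)) eq_sym.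
- by apply: ordinal_sum_cmp; rewrite (eqP (inC _ yC)).
- exact: cM.
Qed.

Lemma block_lift_maximal C M :
  maximal_chain ltU C -> maximal_chain lt M -> maximal_chain lt (block_lift C M).
Proof.
move=> mC mM; split; first exact: block_lift_chain mC.1 mM.1.
move=> D cD /subsetP sD; apply/eqP; rewrite eqEsubset andbC; apply/andP; split.
  exact/subsetP.
apply/subsetP => x xD; rewrite !inE; case: (boolP (b x == i)) => bx.
  pose u : U := exist _ x bx.
  suff uC : u \in C by rewrite (imset_f val uC).
  apply: maximal_chain_setU1 mC (is_chain_setU1 mC.1 _) => v vC ne.
  apply: cD => //; first by apply: sD; rewrite !inE imset_f.
  by apply: contraNneq ne => /val_inj ->.
suff -> : x \in M by rewrite orbT.
apply: maximal_chain_setU1 mM (is_chain_setU1 mM.1 _) => w wM ne.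
case: (eqVneq (b w) i) => [bw | bw]; first by apply: ordinal_sum_cmp; rewrite bw.
by apply: cD => //; [apply: sD; rewrite !inE wM bw orbT | rewrite eq_sym].
Qed.

Lemma card_block_lift C M :
  #|block_lift C M| = #|C| + #|[set x in M | b x != i]|.
Proof.
rewrite cardsU card_imset; last exact: val_inj.
suff -> : val @: C :&: [set x in M | b x != i] = set0 by rewrite cards0 subn0.
apply/setP => x; rewrite !inE; apply/negP => /andP [/imsetP [u _ ->]].
by rewrite (valP u) andbF.
Qed.

Lemma block_ranked : (exists x, b x == i) -> ranked lt -> ranked ltU.
Proof.
move=> [x0 bx0] [N rk].
have chain0 (S : finType) (r : rel S) : is_chain r set0 by move=> x y; rewrite inE.
have [M0 mM0 _] := maximal_chain_ext (chain0 _ lt).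
have [C0 mC0 _] := maximal_chain_ext (chain0 _ ltU).
have cardC C : maximal_chain ltU C -> #|C| + #|[set x in M0 | b x != i]| = N.+1.
  by move=> mC; rewrite -card_block_lift; apply/rk/block_lift_maximal.
have C0_gt0 : 0 < #|C0|.
  rewrite lt0n; apply/negP => /eqP /cards0_eq C0E.
  suff : exist _ x0 bx0 \in C0 by rewrite C0E inE.
  apply: maximal_chain_setU1 (mC0) _; rewrite C0E.
  by apply: is_chain_setU1 (chain0 _ _) _ => w; rewrite inE.
exists #|C0|.-1 => C mC; rewrite prednK //.
by apply/eqP; rewrite -(eqn_add2r #|[set x in M0 | b x != i]|) !cardC.
Qed.

End Block.

Lemma sub_rel_strict_order (T : finType) (A : pred T) (lt : rel T) :
  strict_order lt -> strict_order (sub_rel A lt).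
Proof. by case=> irr tr; split=> [u | u v w]; [apply: irr | apply: tr]. Qed.

Section NiceSectionCharacterization.
Variables (T : finType) (lt : rel T).
Hypothesis so : strict_order lt.

Lemma iso_nice_section_card : iso_nice_section lt -> 0 < #|T|.
Proof.
case=> [[[-> _] _] | [n [_ [lt' [_ _ _ [f [[g _ _] _]]]]]]] //.
by apply/card_gt0P; exists (g (ord0, ord0)).
Qed.

Lemma iso_nice_section_stack :
  ranked lt -> iso_nice_section lt -> two_antichain lt \/ six_stack lt.
Proof.
move=> rkd [[ta _] | [n [n1 [lt' [so' ax nc iso]]]]]; [by left | right].
have rkd' := ranked_poset_iso (poset_iso_sym iso) rkd.
exact: six_stack_poset_iso so so' iso (nice_section_six_stack so' ax n1 nc rkd').
Qed.

Lemma stack_iso_nice_section :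
  two_antichain lt \/ six_stack lt -> iso_nice_section lt.
Proof.
case=> [ta | [n [n1 [rk hC6]]]].
  by left; split=> // p q; rewrite (negbTE (ta.2 p q)).
case: so => irr tr; right; exists n; split=> //; exists (@crown_section n); split.
- exact: crown_section_strict_order.
- exact: crown_section_axioms.
- exact: crown_section_nice.
- exact: six_stack_crown_iso.
Qed.

End NiceSectionCharacterization.

Theorem proposition4p2 :
  (forall (T : finType) (lt : rel T), strict_order lt -> ranked lt ->
     (iso_nice_section lt <-> two_antichain lt \/ six_stack lt)) /\
  (forall (T : finType) (lt : rel T), strict_order lt -> ranked lt ->
     (tower_of_nice_sections lt <-> six_tower lt)).
Proof.
split=> T lt so rkd.
  by split; [apply: iso_nice_section_stack | apply: stack_iso_nice_section].
split=> [] [K [b [K0 [hb hQ]]]]; exists K, b; do 2!split=> //; move=> i.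
  have soB := sub_rel_strict_order (fun x => b x == i) so.
  have [[x0 bx0] _] := card_gt0P (iso_nice_section_card (hQ i)).
  exact: iso_nice_section_stack soB (block_ranked hb (ex_intro _ x0 bx0) rkd) (hQ i).
exact: stack_iso_nice_section (sub_rel_strict_order _ so) (hQ i).
Qed.
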